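(* Let $\mathrm{V}=\{1,\dots,n\}$ with $n=r_1r_2\cdots r_k$ for integers $k\ge2$ and $r_1,\dots,r_k\ge2$. Then there exist a graph $\mathrm{G}$ on $\mathrm{V}$, a clique coverage of $\mathrm{G}$ whose cliques have sizes in $\{r_1,\dots,r_k\}$, and a sequence of $\sum_{i=1}^k\prod_{j\ne i}r_j$ cliques from it, along which the clique-gossip averaging algorithm satisfies $\mathbf{x}(T)=\big(\frac1n\sum_j\mathbf{x}_j(0)\big)\mathbf{1}$ with $T=\sum_{i=1}^k\prod_{j\ne i}r_j$, for every initial value $\mathbf{x}(0)\in\mathbb{R}^n$.
   Context: A clique of a simple undirected graph $\mathrm{G}$ on $\mathrm{V}$ is a vertex subset inducing a complete subgraph; a clique coverage is a finite set of cliques whose union is $\mathrm{V}$ and whose union of induced subgraphs is connected. The clique-gossip averaging algorithm along a sequence of cliques $\mathrm{Q}_0,\mathrm{Q}_1,\dots$ acts on $\mathbf{x}(t)\in\mathbb{R}^n$ by $\mathbf{x}_i(t+1)=\frac{1}{|\mathrm{Q}_t|}\sum_{j\in\mathrm{Q}_t}\mathbf{x}_j(t)$ if $i\in\mathrm{Q}_t$ and $\mathbf{x}_i(t+1)=\mathbf{x}_i(t)$ otherwise. $\mathbf{1}$ is the all-ones vector. *)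

From HB Require Import structures.
From mathcomp Require Import all_boot all_order all_algebra.
Set Implicit Arguments. Unset Strict Implicit. Unset Printing Implicit Defensive.
Import Order.TTheory GRing.Theory Num.Theory.

Definition simple_graph (T : finType) (e : rel T) : Prop :=
  (forall x y, e x y = e y x) /\ (forall x, ~~ e x x).

Definition is_clique (T : finType) (e : rel T) (Q : {set T}) : Prop :=
  forall x y, x \in Q -> y \in Q -> x != y -> e x y.

Definition cover_rel (T : finType) (C : {set {set T}}) : rel T :=
  fun x y => (x != y) && [exists Q in C, (x \in Q) && (y \in Q)].

Definition clique_coverage (T : finType) (e : rel T) (C : {set {set T}}) : Prop :=
  (forall Q, Q \in C -> is_clique e Q) /\
  (\bigcup_(Q in C) Q = [set: T]) /\
  (forall x y, connect (cover_rel C) x y).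

Local Open Scope ring_scope.

Definition gossip_step (R : fieldType) (n : nat) (Q : {set 'I_n})
    (x : 'I_n -> R) : 'I_n -> R :=
  fun i => if i \in Q then (#|Q|%:R)^-1 * \sum_(j in Q) x j else x i.

Definition gossip_run (R : fieldType) (n : nat) (s : seq {set 'I_n})
    (x0 : 'I_n -> R) : 'I_n -> R :=
  foldl (fun x Q => gossip_step Q x) x0 s.

From HB Require Import structures.
From mathcomp Require Import all_boot all_order all_algebra.
Import Order.TTheory GRing.Theory Num.Theory.
From mathcomp Require Import zify ring.
Set Implicit Arguments. Unset Strict Implicit. Unset Printing Implicit Defensive.

(* Write each vertex in mixed radix, with digits d_0, ..., d_(k-1), d_i < r_i.  Stage i
   averages, for each choice of the other digits, the r_i-clique of vertices that differ
   only in digit i; these prod_(j != i) r_j cliques are pairwise disjoint.  By induction,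
   after stages 0, ..., j-1 the value at v is the mean of x(0) over the block of vertices
   sharing v's digits j, ..., k-1, and after the last stage that block is all of V.  The
   same lines connect any two vertices by changing one digit at a time. *)


Section MixedRadix.
Variables d r : nat.

Definition radix_point b t a := b * (d * r) + t * d + a.

Lemma radix_pointK w : radix_point (w %/ (d * r)) (w %/ d %% r) (w %% d) = w.
Proof.
rewrite /radix_point divnMA {4}(divn_eq w d) {3}(divn_eq (w %/ d) r); ring.
Qed.

Variables b t a : nat.

Lemma radix_pointE : radix_point b t a = (b * r + t) * d + a.
Proof. by rewrite /radix_point; ring. Qed.

Hypotheses (t_lt_r : t < r) (a_lt_d : a < d).

Lemma radix_point_div : radix_point b t a %/ d = b * r + t.
Proof.
have d_gt0 : 0 < d by apply: leq_ltn_trans a_lt_d.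
by rewrite radix_pointE divnMDl // divn_small // addn0.
Qed.

Lemma radix_point_mod : radix_point b t a %% d = a.
Proof. by rewrite radix_pointE modnMDl modn_small. Qed.

Lemma radix_point_digit : radix_point b t a %/ d %% r = t.
Proof. by rewrite radix_point_div modnMDl modn_small. Qed.

Lemma radix_point_high : radix_point b t a %/ (d * r) = b.
Proof.
have r_gt0 : 0 < r by apply: leq_ltn_trans t_lt_r.
by rewrite divnMA radix_point_div divnMDl // divn_small // addn0.
Qed.

Lemma radix_point_lt P : b < P -> radix_point b t a < d * r * P.
Proof.
move=> b_lt_P; have low : t * d + a < d * r by nia.
by rewrite /radix_point; nia.
Qed.

End MixedRadix.

Section Lines.
Variables n d r P : nat.
Hypotheses (d_gt0 : 0 < d) (r_gt0 : 0 < r) (n_eq : n = d * r * P).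

(* The vertices [radix_point d r b t a], t < r: only the digit of place value d varies. *)
Definition line a b : {set 'I_n} :=
  [set w : 'I_n | (w %% d == a) && (w %/ (d * r) == b)].

Lemma mem_line_self (v : 'I_n) : v \in line (v %% d) (v %/ (d * r)).
Proof. by rewrite inE !eqxx. Qed.

Lemma high_part_lt (v : 'I_n) : v %/ (d * r) < P.
Proof. by rewrite ltn_divLR ?muln_gt0 ?d_gt0 // mulnC -n_eq. Qed.

Lemma line_eq_or_disjoint a b a' b' :
  line a b = line a' b' \/ [disjoint line a b & line a' b'].
Proof.
have [/andP [/eqP <- /eqP <-] | neq] := boolP ((a == a') && (b == b')); first by left.
right; apply/pred0P => w /=; rewrite !inE.
apply/negP => /andP [/andP [/eqP wa /eqP wb] /andP [/eqP wa' /eqP wb']].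
by move: neq; rewrite -wa -wb -wa' -wb' !eqxx.
Qed.

Lemma val_insubd_radix_point (w0 : 'I_n) b t a : b < P -> t < r -> a < d ->
  val (insubd w0 (radix_point d r b t a)) = radix_point d r b t a.
Proof.
by move=> b_lt t_lt a_lt; rewrite val_insubd (_ : _ < n) // n_eq radix_point_lt.
Qed.

Lemma card_line a b : a < d -> b < P -> #|line a b| = r.
Proof.
move=> a_lt b_lt.
have n_gt0 : 0 < n by rewrite n_eq !muln_gt0 d_gt0 r_gt0 (leq_ltn_trans _ b_lt).
pose f (t : 'I_r) := insubd (Ordinal n_gt0) (radix_point d r b t a).
have fE (t : 'I_r) : val (f t) = radix_point d r b t a.
  exact: val_insubd_radix_point.
have -> : line a b = f @: [set: 'I_r].
  apply/setP => w; rewrite inE; apply/andP/imsetP.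
    case=> /eqP wa /eqP wb; exists (Ordinal (ltn_pmod (w %/ d) r_gt0)) => //.
    by apply: val_inj; rewrite fE /= -wa -wb radix_pointK.
  by case=> t _ ->; rewrite fE radix_point_mod ?radix_point_high.
rewrite card_imset ?cardsT ?card_ord // => t1 t2 /(congr1 val); rewrite !fE => e.
by apply: val_inj; rewrite /= -(radix_point_digit b (ltn_ord t1) a_lt) e radix_point_digit.
Qed.

Lemma mem_line_block a (u w : 'I_n) : a < d ->
  (w \in line a (u %/ (d * r))) && (w %/ d == u %/ d)
  = (val w == radix_point d r (u %/ (d * r)) (u %/ d %% r) a).
Proof.
move=> a_lt; have t_lt : u %/ d %% r < r by rewrite ltn_pmod.
rewrite inE; apply/idP/eqP => [/andP [/andP [/eqP wa /eqP wb] /eqP wu] | ->].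
  by rewrite -wa -wb -wu radix_pointK.
rewrite radix_point_mod // radix_point_high // radix_point_div // !eqxx /=.
by rewrite {2}(divn_eq (u %/ d) r) -divnMA.
Qed.

Lemma sum_line_blocks (V : nmodType) (x : 'I_n -> V) (v : 'I_n) :
  (\sum_(w in line (v %% d)%N (v %/ (d * r))%N)
     \sum_(u : 'I_n | (u %/ d == w %/ d)%N) x u
   = \sum_(u : 'I_n | (u %/ (d * r) == v %/ (d * r))%N) x u)%R.
Proof.
have a_lt : v %% d < d by rewrite ltn_pmod.
rewrite (exchange_big_dep xpredT) //= [RHS]big_mkcond; apply: eq_bigr => u _.
case: eqP => [uv | uv].
  have t_lt : u %/ d %% r < r by rewrite ltn_pmod.
  pose z := insubd v (radix_point d r (v %/ (d * r)) (u %/ d %% r) (v %% d)).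
  rewrite (big_pred1 z) // => w.
  rewrite /= [(_ == w %/ d)%N]eq_sym -val_eqE /=.
  by rewrite /z val_insubd_radix_point ?high_part_lt // -uv mem_line_block.
rewrite big_pred0 // => w; apply/negbTE/negP; rewrite inE => /andP [/andP [_ /eqP wb] /eqP wu].
by apply: uv; rewrite !divnMA wu -!divnMA wb.
Qed.

End Lines.

Section CoverGraph.
Variables (T : finType) (C : {set {set T}}).

Lemma cover_rel_simple : simple_graph (cover_rel C).
Proof.
split=> [x y | x]; rewrite /cover_rel; last by rewrite eqxx.
rewrite eq_sym; congr andb; apply: eq_existsb => Q.
by rewrite [(y \in Q) && _]andbC.
Qed.

Lemma cover_rel_clique Q : Q \in C -> is_clique (cover_rel C) Q.
Proof.
move=> QC x y xQ yQ xy; rewrite /cover_rel xy /=.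
by apply/existsP; exists Q; rewrite QC xQ yQ.
Qed.

End CoverGraph.

Section Schedule.
Variables (n k : nat) (rr : nat -> nat).

Definition prod_below i := \prod_(j < i) rr j.
Definition prod_above i := \prod_(i.+1 <= j < k) rr j.

Definition stage i : seq {set 'I_n} :=
  [seq line n (prod_below i) (rr i) a b
     | a <- iota 0 (prod_below i), b <- iota 0 (prod_above i)].

Definition schedule j : seq {set 'I_n} := flatten [seq stage i | i <- iota 0 j].

Lemma prod_below0 : prod_below 0 = 1.
Proof. by rewrite /prod_below big_ord0. Qed.

Lemma prod_belowS i : prod_below i.+1 = prod_below i * rr i.
Proof. by rewrite /prod_below big_ord_recr. Qed.

Lemma prod_below_split i : i < k -> prod_below k = prod_below i * rr i * prod_above i.
Proof.
move=> ik; rewrite -prod_belowS /prod_below /prod_above -!(big_mkord xpredT).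
by rewrite (big_cat_nat _ ik) ?leq0n.
Qed.

Lemma prod_except i : i < k ->
  \prod_(j < k | j != i :> nat) rr j = prod_below i * prod_above i.
Proof.
move=> ik; rewrite -(big_mkord (fun j => j != i)) (big_cat_nat (leq0n i) (ltnW ik)) /=.
rewrite [X in _ * X]big_ltn_cond // eqxx /prod_below /prod_above -(big_mkord xpredT).
congr (_ * _); rewrite big_nat_cond [RHS]big_nat_cond; apply: eq_bigl => j;
  rewrite andbT; apply: andb_idr => /andP [ij jk]; lia.
Qed.

Lemma scheduleS j : schedule j.+1 = schedule j ++ stage j.
Proof. by rewrite /schedule -addn1 iotaD map_cat flatten_cat /= cats0. Qed.

Lemma size_schedule j : size (schedule j) = \sum_(i < j) prod_below i * prod_above i.
Proof.
elim: j => [|j IH]; first by rewrite big_ord0.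
by rewrite scheduleS size_cat IH big_ord_recr /= size_allpairs !size_iota.
Qed.

Lemma mem_stage i Q : Q \in stage i ->
  exists a b, [/\ a < prod_below i, b < prod_above i
                  & Q = line n (prod_below i) (rr i) a b].
Proof.
case/allpairsP => [[a b] /= [aI bI ->]]; exists a, b.
by move: aI bI; rewrite !mem_iota /= !add0n => -> ->.
Qed.

Lemma mem_schedule j Q : (Q \in schedule j) = has (fun i => Q \in stage i) (iota 0 j).
Proof.
apply/flattenP/hasP => [[s /mapP [i iI ->]] | [i iI QI]]; first by exists i.
by exists (stage i); first exact: map_f.
Qed.

Lemma stage_sub_schedule i j : i < j -> {subset stage i <= schedule j}.
Proof. by move=> ij Q QI; rewrite mem_schedule; apply/hasP; exists i; rewrite ?mem_iota. Qed.

Hypotheses (rr_gt0 : forall j, 0 < rr j) (n_eq : n = prod_below k).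

Lemma prod_below_gt0 i : 0 < prod_below i.
Proof. exact: prodn_gt0. Qed.

Lemma n_eq_split i : i < k -> n = prod_below i * rr i * prod_above i.
Proof. by move=> ik; rewrite n_eq (prod_below_split ik). Qed.

Lemma line_in_stage i a b : a < prod_below i -> b < prod_above i ->
  line n (prod_below i) (rr i) a b \in stage i.
Proof. by move=> aI bI; apply: allpairs_f; rewrite mem_iota. Qed.

Lemma mem_stage_self i (v : 'I_n) : i < k ->
  line n (prod_below i) (rr i) (v %% prod_below i) (v %/ (prod_below i * rr i)) \in stage i.
Proof.
move=> ik; apply: line_in_stage; first by rewrite ltn_pmod ?prod_below_gt0.
exact: (high_part_lt (prod_below_gt0 i) (rr_gt0 i) (n_eq_split ik)).
Qed.

Lemma card_stage i Q : i < k -> Q \in stage i -> #|Q| = rr i.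
Proof.
move=> ik /mem_stage [a [b [aI bI ->]]].
exact: (card_line (prod_below_gt0 i) (rr_gt0 i) (n_eq_split ik)).
Qed.

Lemma stage_eq_or_disjoint i :
  {in stage i &, forall A B : {set 'I_n}, A = B \/ [disjoint A & B]}.
Proof.
by move=> A B /mem_stage [a [b [_ _ ->]]] /mem_stage [a' [b' [_ _ ->]]];
  apply: line_eq_or_disjoint.
Qed.

Lemma connect_schedule (C : {set {set 'I_n}}) :
  (forall Q, Q \in schedule k -> Q \in C) ->
  forall j, j <= k -> forall x y : 'I_n, x %/ prod_below j = y %/ prod_below j ->
  connect (cover_rel C) x y.
Proof.
move=> sC; elim=> [_ x y | j IH jk x y].
  by rewrite prod_below0 !divn1 => /val_inj ->; apply: connect0.
rewrite prod_belowS => xy.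
set d := prod_below j in xy *; set r := rr j in xy *.
have d_gt0 : 0 < d := prod_below_gt0 j.
have n_eqj : n = d * r * prod_above j := n_eq_split jk.
have a_lt : y %% d < d by rewrite ltn_pmod.
pose z := insubd x (radix_point d r (x %/ (d * r)) (x %/ d %% r) (y %% d)).
have /andP [zL zx] : (z \in line n d r (y %% d) (x %/ (d * r))) && (z %/ d == x %/ d).
  rewrite mem_line_block ?rr_gt0 // /z (val_insubd_radix_point n_eqj) ?ltn_pmod ?rr_gt0 //.
  exact: (high_part_lt d_gt0 (rr_gt0 j) n_eqj).
apply: connect_trans (IH (ltnW jk) x z _) _; first by rewrite (eqP zx).
have [-> | zy] := eqVneq z y; first exact: connect0.
rewrite xy in zL; apply: connect1; rewrite /cover_rel zy /=; apply/existsP.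
exists (line n d r (y %% d) (y %/ (d * r))); rewrite zL mem_line_self !andbT.
by apply/sC/(stage_sub_schedule jk)/mem_stage_self.
Qed.

End Schedule.

Local Open Scope ring_scope.

Section GossipRuns.
Variables (R : numFieldType) (n : nat).
Implicit Types (Q : {set 'I_n}) (L : seq {set 'I_n}) (x : 'I_n -> R).

Definition mean_on Q x : R := (#|Q|%:R)^-1 * \sum_(j in Q) x j.

Lemma mean_on_gossip_step Q x : mean_on Q (gossip_step Q x) = mean_on Q x.
Proof.
rewrite {1}/mean_on (eq_bigr (fun => mean_on Q x)) => [|j jQ]; last first.
  by rewrite /gossip_step jQ.
have [-> | /set0Pn [w wQ]] := eqVneq Q set0; first by rewrite /mean_on !big_set0.
have Q_nz : (#|Q|%:R : R) != 0 by rewrite pnatr_eq0 -lt0n; apply/card_gt0P; exists w.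
by rewrite sumr_const -[mean_on Q x *+ _]mulr_natl mulKf.
Qed.

Lemma mean_on_gossip_step_disjoint Q Q' x :
  [disjoint Q & Q'] -> mean_on Q (gossip_step Q' x) = mean_on Q x.
Proof.
move=> QQ'; congr (_ * _); apply: eq_bigr => j jQ; rewrite /gossip_step.
by rewrite (disjointFr QQ' jQ).
Qed.

Lemma gossip_run_notin L x v :
  (forall Q, Q \in L -> v \notin Q) -> gossip_run L x v = x v.
Proof.
elim: L x => [// | Q L IH] x vL; rewrite [LHS]IH => [|Q' Q'L].
  by rewrite /gossip_step (negbTE (vL Q (mem_head _ _))).
by apply: vL; rewrite inE Q'L orbT.
Qed.

Lemma gossip_run_mean L x Q v :
  {in L &, forall A B : {set 'I_n}, A = B \/ [disjoint A & B]} -> Q \in L -> v \in Q ->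
  gossip_run L x v = mean_on Q x.
Proof.
elim: L x => [// | Q0 L IH] x Ldisj QL vQ.
have L0disj : {in L &, forall A B : {set 'I_n}, A = B \/ [disjoint A & B]}.
  by move=> A B AL BL; apply: Ldisj; rewrite inE ?AL ?BL orbT.
rewrite /= -/(gossip_run L _ v).
have Q0L : Q0 \in Q0 :: L := mem_head _ _.
have [QinL | QnotinL] := boolP (Q \in L).
  rewrite (IH _ L0disj QinL vQ).
  have [<- | ] := Ldisj Q0 Q Q0L QL; first exact: mean_on_gossip_step.
  by rewrite disjoint_sym; apply: mean_on_gossip_step_disjoint.
have QQ0 : Q = Q0 by move: QL; rewrite inE (negbTE QnotinL) orbF => /eqP.
rewrite gossip_run_notin => [|A AL]; first by rewrite /gossip_step -QQ0 vQ.
have AL' : A \in Q0 :: L by rewrite inE AL orbT.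
have [AQ | AQ] := Ldisj Q0 A Q0L AL'.
  by move: QnotinL; rewrite QQ0 AQ AL.
by rewrite -QQ0 in AQ; rewrite (disjointFr AQ vQ).
Qed.

End GossipRuns.

Section ScheduleMeans.
Variables (R : numFieldType) (n : nat).
Implicit Types (x : 'I_n -> R) (v : 'I_n).

Definition block_mean m x v : R :=
  (m%:R)^-1 * \sum_(u : 'I_n | (u %/ m == v %/ m)%N) x u.

Lemma mean_on_line d r P x v : (0 < d)%N -> (0 < r)%N -> n = (d * r * P)%N ->
  mean_on (line n d r (v %% d)%N (v %/ (d * r))%N) (block_mean d x) = block_mean (d * r) x v.
Proof.
move=> d_gt0 r_gt0 n_eq; have v_lt := high_part_lt d_gt0 r_gt0 n_eq v.
rewrite /mean_on (card_line d_gt0 r_gt0 n_eq) ?ltn_pmod // /block_mean -mulr_sumr.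
rewrite (sum_line_blocks d_gt0 r_gt0 n_eq) natrM invfM; ring.
Qed.

Variables (k : nat) (rr : nat -> nat).
Hypotheses (rr_gt0 : forall j, (0 < rr j)%N) (n_eq : n = prod_below rr k).

Lemma gossip_run_schedule j x v : (j <= k)%N ->
  gossip_run (schedule n k rr j) x v = block_mean (prod_below rr j) x v.
Proof.
elim: j v => [|j IH] v jk.
  rewrite /block_mean prod_below0 invr1 mul1r (big_pred1 v) // => u.
  by rewrite !divn1.
have n_eqj := n_eq_split n_eq jk.
rewrite scheduleS /gossip_run foldl_cat -/(gossip_run _ _).
rewrite (gossip_run_mean _ (@stage_eq_or_disjoint _ _ _ _) (mem_stage_self rr_gt0 n_eq v jk)
          (mem_line_self _ _ v)).
rewrite prod_belowS -(mean_on_line _ _ (prod_below_gt0 rr_gt0 j) (rr_gt0 j) n_eqj).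
congr (_ * _); apply: eq_bigr => w _; exact: IH (ltnW jk).
Qed.

End ScheduleMeans.

Theorem mainTheorem8 (R : realFieldType) (k : nat) (r : 'I_k -> nat) (n : nat)
  (hk : (2 <= k)%N) (hr : forall i, (2 <= r i)%N)
  (hn : n = (\prod_(i < k) r i)%N) :
  let T := (\sum_(i < k) \prod_(j < k | j != i) r j)%N in
  exists (e : rel 'I_n) (C : {set {set 'I_n}}) (s : seq {set 'I_n}),
    simple_graph e /\
    clique_coverage e C /\
    (forall Q, Q \in C -> exists i : 'I_k, #|Q| = r i) /\
    size s = T /\
    (forall Q, Q \in s -> Q \in C) /\
    (forall x0 : 'I_n -> R, forall i : 'I_n,
           gossip_run s x0 i = (n%:R)^-1 * \sum_(j < n) x0 j).
Proof.
case: k r hk hr hn => [// | k] r _ hr hn T.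
pose rr j := r (inord j).
have rr_gt0 j : (0 < rr j)%N by apply: leq_trans (hr _).
have n_eq : n = prod_below rr k.+1.
  by rewrite hn; apply: eq_bigr => i _; rewrite /rr inord_val.
pose s := schedule n k.+1 rr k.+1; pose C := [set Q in s].
have sC Q : Q \in s -> Q \in C by rewrite inE.
exists (cover_rel C), C, s; split; first exact: cover_rel_simple.
split; [split; [|split] | split; [|split; [|split]]] => //.
- by move=> Q; apply: cover_rel_clique.
- apply/setP => v; rewrite inE; apply/bigcupP.
  pose d := prod_below rr 0.
  exists (line n d (rr 0) (v %% d)%N (v %/ (d * rr 0))%N); last exact: mem_line_self.
  by apply/sC/(stage_sub_schedule (ltn0Sn k))/(mem_stage_self rr_gt0 n_eq).
- move=> x y; apply: (connect_schedule rr_gt0 n_eq sC (leqnn _)).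
  by rewrite -n_eq !divn_small.
- move=> Q; rewrite inE mem_schedule => /hasP [i]; rewrite mem_iota /= => ik QI.
  by exists (inord i); apply: (card_stage rr_gt0 n_eq ik).
- rewrite size_schedule; apply: eq_bigr => i _; rewrite -(prod_except rr (ltn_ord i)).
  by apply: eq_bigr => j _; rewrite /rr inord_val.
- move=> x0 v; rewrite (gossip_run_schedule rr_gt0 n_eq _ _ (leqnn _)) /block_mean -n_eq.
  by congr (_ * _); apply: eq_bigl => u; rewrite !divn_small.
Qed.
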